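(* In the setting of the periodic log-normal approximation (below), with $\boldsymbol\Phi_{D^\star}(\theta)\in\overline{\mathbf{CM}}(n)$, suppose at least one of the following holds: (1) $\omega=n$; (2) $\delta_{k_3}=n$ for some $k_3\in\{1,\dots,\omega\}$; (3) $\overline\omega=n$; (4) $\overline\delta_{k_4}=n$ for some $k_4\in\{1,\dots,\overline\omega\}$. Then $\Sigma^d_\epsilon(t)$ is positive definite for every $t\ge0$.
   Context: Setting: $D^\star:[0,\infty)\to\mathbb{R}^{n\times n}$, $\Lambda^\star:[0,\infty)\to\mathbb{R}^{n\times N}$ continuous and $\theta$-periodic (in the paper, $D^\star(t)$ is the Jacobian with respect to $\ln\mathbf{x}$ of $F_i(t,\mathbf{x})=f_i(t,\mathbf{x})/x_i-\frac\epsilon2\sum_jg_{ij}^2(t,\mathbf{x})$ at $e^{\boldsymbol\Psi^\star_\epsilon(t)}$ and $\Lambda^\star(t)=(g_{ij}(t,e^{\boldsymbol\Psi^\star_\epsilon(t)}))$). $\boldsymbol\Phi_{D^\star}$ is the fundamental matrix with $\boldsymbol\Phi_{D^\star}(0)=\mathbf{I}_n$; $\overline{\mathbf{CM}}(n)$ is the set of real $n\times n$ matrices with all eigenvalues of modulus in $(0,1)$. $\Upsilon(t)=\int_0^t(\boldsymbol\Phi_{D^\star}(t)\boldsymbol\Phi_{D^\star}^{-1}(s)\Lambda^\star(s))(\cdots)^{\top}ds$; $\Sigma^d_\epsilon(0)$ is the unique symmetric solution of $\boldsymbol\Phi_{D^\star}(\theta)\Sigma\boldsymbol\Phi_{D^\star}(\theta)^\top-\Sigma+\epsilon\Upsilon(\theta)=\mathbb{O}$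 and $\Sigma^d_\epsilon(t)=\boldsymbol\Phi_{D^\star}(t)\Sigma^d_\epsilon(0)\boldsymbol\Phi_{D^\star}^\top(t)+\epsilon\Upsilon(t)$, $\epsilon>0$. $E_{n,j}$ is the diagonal matrix with a single $1$ at $(j,j)$; $\mathbf{u}_j$ the $j$-th standard basis vector. $\omega=\operatorname{rank}\Upsilon(\theta)$; $\mathcal{H}_\epsilon$ orthogonal with $\mathcal{H}_\epsilon\Upsilon(\theta)\mathcal{H}_\epsilon^\top=\sum_{k=1}^\omega\lambda_k^\oplus E_{n,\mu_k}$, $\lambda_k^\oplus>0$, $\mu_1<\dots<\mu_\omega$; $A_{[3]}=\mathcal{H}_\epsilon\boldsymbol\Phi_{D^\star}(\theta)\mathcal{H}_\epsilon^{-1}$ and $\delta_k:=\dim\operatorname{span}\{A_{[3]}^j\mathbf{u}_{\mu_k}:j\ge0\}$. Further $\lambda^\oplus_\vartriangle>0$, $\overline\omega\in\{0,\dots,\omega\}$ and indices $\overline\mu_1<\dots<\overline\mu_{\overline\omega}$ are such that $\Upsilon(\theta)\succeq\lambda^\oplus_\vartriangle\sum_{k=1}^{\overline\omega}E_{n,\overline\mu_k}$, and $\overline\delta_k:=\dim\operatorname{span}\{\boldsymbol\Phi_{D^\star}(\theta)^j\mathbf{u}_{\overline\mu_k}:j\ge0\}$. *)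

From HB Require Import structures.
From mathcomp Require Import all_boot all_order all_algebra.
From mathcomp Require Import all_classical all_reals all_analysis.
From mathcomp Require Import complex.
Set Implicit Arguments. Unset Strict Implicit. Unset Printing Implicit Defensive.
Import Order.TTheory GRing.Theory Num.Theory.
Import numFieldNormedType.Exports.
Local Open Scope classical_set_scope.
Local Open Scope ring_scope.

Definition Emat (R : pzRingType) (n : nat) (j : 'I_n) : 'M[R]_n := delta_mx j j.

Definition ubasis (R : pzRingType) (n : nat) (j : 'I_n) : 'cV[R]_n := delta_mx j 0.

Definition posdef (R : realType) (n : nat) (M : 'M[R]_n) : Prop :=
  M^T = M /\ forall x : 'cV[R]_n, x != 0 -> 0 < (x^T *m M *m x) 0 0.
Definition psd (R : realType) (n : nat) (M : 'M[R]_n) : Prop :=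
  M^T = M /\ forall x : 'cV[R]_n, 0 <= (x^T *m M *m x) 0 0.

Definition CMbar (R : realType) (n : nat) (A : 'M[R]_n) : Prop :=
  forall z : R[i], root (char_poly (map_mx (fun x : R => (x%:C)%C) A)) z ->
    (0 < `|z| < 1).

Definition krylov (R : pzRingType) (n N : nat) (A : 'M[R]_n) (u : 'cV[R]_n)
  : 'M[R]_(N, n) := \matrix_(j < N, k < n) ((A ^+ j) *m u) k 0.

(* dim span{ A^j u : j >= 0 } = d : the span of the whole (infinite) family
   is the increasing union of the spans of its first N members, so its
   dimension is the maximum over all N of the rank of the Krylov matrix. *)
Definition krylov_dim_eq (R : fieldType) (n : nat) (A : 'M[R]_n)
  (u : 'cV[R]_n) (d : nat) : Prop :=
  (exists N, \rank (krylov N A u) = d) /\ (forall N, \rank (krylov N A u) <= d)%N.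

Definition fundamental (R : realType) (n : nat) (D : R -> 'M[R]_n)
  (Phi : R -> 'M[R]_n) : Prop :=
  Phi 0 = 1%:M /\
  forall (t : R) (i j : 'I_n),
    is_derive t (1 : R) (fun s : R => Phi s i j) ((D t *m Phi t) i j).

Definition Upsilon (R : realType) (n N : nat) (Phi : R -> 'M[R]_n)
  (Lam : R -> 'M[R]_(n, N)) (t : R) : 'M[R]_n :=
  \matrix_(i, j)
    (\int[lebesgue_measure]_(s in `[0, t])
        (let G := Phi t *m invmx (Phi s) *m Lam s in (G *m G^T) i j)).

Definition Sigma_d (R : realType) (n N : nat) (Phi : R -> 'M[R]_n)
  (Lam : R -> 'M[R]_(n, N)) (eps : R) (S0 : 'M[R]_n) (t : R) : 'M[R]_n :=
  Phi t *m S0 *m (Phi t)^T + eps *: Upsilon Phi Lam t.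

Arguments Emat {R n} j.
Arguments ubasis {R n} j.

From HB Require Import structures.
From mathcomp Require Import all_boot all_order all_algebra.
From mathcomp Require Import all_classical all_reals all_analysis.
From mathcomp Require Import complex.
From mathcomp Require Import ring lra.
Set Implicit Arguments. Unset Strict Implicit. Unset Printing Implicit Defensive.
Import Order.TTheory GRing.Theory Num.Theory.
Import numFieldNormedType.Exports.
Local Open Scope classical_set_scope.
Local Open Scope ring_scope.

(* Unfolding the discrete Lyapunov equation gives
   Sigma(0) = sum_{k<m} A^k (eps U) A^k^T + A^m Sigma(0) A^m^T with A = Phi(theta)
   and U = Upsilon(theta); since every eigenvalue of A lies in the open unit
   disc, A^m -> 0, so x^T Sigma(0) x >= eps x^T A^k U A^k^T x for every k.
   Each of the four hypotheses makes the pair (A, U^(1/2)) controllable, i.e.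
   for x <> 0 one of these terms is positive, so Sigma(0) is positive definite.
   Finally Sigma(t) = Phi(t) Sigma(0) Phi(t)^T + eps Upsilon(t), where Phi(t)
   is invertible (Gronwall) and Upsilon(t), an integral of Gram matrices, is
   positive semidefinite. *)

Section ContractingRecursion.
Variable R : realType.

Lemma cvg0_contracting_rec (r : R) (b g : nat -> R) :
  0 <= r < 1 -> (forall m, 0 <= b m) -> (forall m, b m.+1 <= r * b m + g m) ->
  g m @[m --> \oo] --> 0 -> b m @[m --> \oo] --> 0.
Proof.
move=> /andP[r0 r1] b0 brec /cvgr0Pnorm_lt g0; apply/cvgr0Pnorm_lt => e e0.
have de0 : 0 < e * (1 - r) / 2 by rewrite divr_gt0 // mulr_gt0 // subr_gt0.
have [M _ gM] := g0 _ de0.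
have bM k : b (M + k)%N <= r ^+ k * b M + e / 2.
  elim: k => [|k IH]; first by rewrite addn0 expr0 mul1r lerDl divr_ge0 // ltW.
  have gk : g (M + k)%N <= e * (1 - r) / 2.
    by rewrite (le_trans (ler_norm _)) // ltW // gM //= leq_addr.
  rewrite addnS (le_trans (brec _)) // exprS.
  have := ler_wpM2l r0 IH; nra.
have : (fun k => r ^+ k * b M) @ \oo --> 0.
  rewrite -(mul0r (b M)); apply: cvgM; last exact: cvg_cst.
  by apply: cvg_expr; rewrite ger0_norm.
move/cvgr0Pnorm_lt => /(_ _ (divr_gt0 e0 (ltr0n _ 2))) [K _ rK].
exists (M + K)%N => // m /= Mm; rewrite -(subnKC (leq_trans (leq_addr K M) Mm)).
have := rK (m - M)%N; rewrite /= leq_subRL ?(leq_trans (leq_addr K M) Mm) // => /(_ Mm).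
rewrite ger0_norm ?mulr_ge0 ?exprn_ge0 // ger0_norm //; have := bM (m - M)%N; lra.
Qed.

End ContractingRecursion.

Section SpectralRadius.
Variable R : realType.
Local Notation normc := (@Normc.normc R).
Local Notation toC := (fun x : R => (x%:C)%C).

Lemma normc_ge0 (z : R[i]) : 0 <= normc z.
Proof. by case: z => a b; rewrite /Normc.normc sqrtr_ge0. Qed.

Lemma normc_real (x : R) : normc (x%:C)%C = `|x|.
Proof. by rewrite /Normc.normc /= expr0n /= addr0 sqrtr_sqr. Qed.

Section Entry.
Variables (n : nat) (Ac : 'M[R[i]]_n.+1) (i j : 'I_n.+1).

Let w (q : {poly R[i]}) m := (Ac ^+ m * horner_mx Ac q) i j.

Lemma horner_mx_entry_shift (z : R[i]) q m :
  w q m.+1 = z * w q m + w (('X - z%:P) * q) m.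
Proof.
rewrite /w rmorphM rmorphB /= horner_mx_X horner_mx_C mulrA mulrBr exprSr mulrBl.
have -> : Ac ^+ m * z%:M * horner_mx Ac q = z *: (Ac ^+ m * horner_mx Ac q).
  by rewrite -!mulmxE mul_mx_scalar scalemxAl.
rewrite !mxE; ring.
Qed.

Lemma horner_mx_entry_cvg0 (s : seq R[i]) q :
  all (fun z => normc z < 1) s ->
  normc (w (\prod_(z <- s) ('X - z%:P) * q) m) @[m --> \oo] --> 0 ->
  normc (w q m) @[m --> \oo] --> 0.
Proof.
elim: s q => [|z s IH] q /=; first by rewrite big_nil mul1r.
move=> /andP[z1 zs]; rewrite big_cons -mulrA mulrCA => /(IH _ zs) hzq.
apply: (cvg0_contracting_rec (r := normc z) _ _ _ hzq).
- by rewrite normc_ge0 z1.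
- by move=> m; exact: normc_ge0.
- by move=> m; rewrite (horner_mx_entry_shift z) (le_trans (le_normcD _ _)) // Normc.normcM.
Qed.

End Entry.

Lemma mxpow_cvg0 n (A : 'M[R]_n) :
  (forall z : R[i], root (char_poly (map_mx toC A)) z -> `|z| < 1) ->
  forall i j, (A ^+ m) i j @[m --> \oo] --> 0.
Proof.
case: n A => [A _ [] //|n A hA i j].
set Ac := map_mx toC A.
have [s chiE] := closed_field_poly_normal (char_poly Ac).
rewrite (monicP (char_poly_monic Ac)) scale1r in chiE.
have s_small : all (fun z => normc z < 1) s.
  apply/allP => z zs; have /hA : root (char_poly Ac) z by rewrite chiE root_prod_XsubC.
  by rewrite -[1]/((1%:C)%C) ltcR.
have hchi : normc ((Ac ^+ m * horner_mx Ac (\prod_(z <- s) ('X - z%:P) * 1)) i j)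
    @[m --> \oo] --> 0.
  rewrite mulr1 -chiE Cayley_Hamilton.
  under eq_fun do rewrite mulr0 mxE Normc.normc0; exact: cvg_cst.
have := horner_mx_entry_cvg0 s_small hchi.
under eq_fun do rewrite rmorph1 mulr1 -rmorphXn mxE normc_real.
exact: norm_cvg0.
Qed.

End SpectralRadius.

Section QuadraticForms.
Variable R : realType.

Definition qform n (M : 'M[R]_n) (x : 'cV[R]_n) : R := (x^T *m M *m x) 0 0.

Lemma qformE n (M : 'M[R]_n) x : qform M x = \sum_i \sum_j x i 0 * M i j * x j 0.
Proof.
rewrite /qform mxE (eq_bigr (fun j => \sum_i x i 0 * M i j * x j 0)).
  by rewrite exchange_big.
by move=> j _; rewrite mxE big_distrl /=; apply: eq_bigr => i _; rewrite !mxE.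
Qed.

Lemma qform0 n (x : 'cV[R]_n) : qform 0 x = 0.
Proof. by rewrite /qform mulmx0 mul0mx mxE. Qed.

Lemma qformD n (M1 M2 : 'M[R]_n) x : qform (M1 + M2) x = qform M1 x + qform M2 x.
Proof. by rewrite /qform mulmxDr mulmxDl mxE. Qed.

Lemma qformZ n c (M : 'M[R]_n) x : qform (c *: M) x = c * qform M x.
Proof. by rewrite /qform -scalemxAr -scalemxAl mxE. Qed.

Lemma qform_sum n I (r : seq I) (P : pred I) (F : I -> 'M[R]_n) x :
  qform (\sum_(i <- r | P i) F i) x = \sum_(i <- r | P i) qform (F i) x.
Proof. exact: (big_morph (fun M => qform M x) (fun M1 M2 => qformD M1 M2 x) (qform0 x)). Qed.

Lemma qform_conj n m (B : 'M[R]_(n, m)) (M : 'M[R]_m) x :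
  qform (B *m M *m B^T) x = qform M (B^T *m x).
Proof. by rewrite /qform trmx_mul trmxK !mulmxA. Qed.

Lemma qform_gram_ge0 n m (G : 'M[R]_(n, m)) x : 0 <= qform (G *m G^T) x.
Proof.
have -> : qform (G *m G^T) x = ((G^T *m x)^T *m (G^T *m x)) 0 0.
  by rewrite /qform trmx_mul trmxK !mulmxA.
by rewrite mxE; apply: sumr_ge0 => k _; rewrite mxE -expr2 sqr_ge0.
Qed.

Lemma qform_delta n (k : 'I_n) x : qform (delta_mx k k) x = x k 0 ^+ 2.
Proof.
rewrite qformE (bigD1 k) //= [X in _ + X]big1 => [|i ik]; last first.
  by rewrite big1 // => j _; rewrite mxE (negbTE ik) mulr0 mul0r.
rewrite addr0 (bigD1 k) //= [X in _ + X]big1 => [|j jk]; last first.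
  by rewrite mxE (negbTE jk) andbF mulr0 mul0r.
by rewrite mxE !eqxx mulr1 addr0 expr2.
Qed.

Lemma qform_diag n (P : {set 'I_n}) (c : 'I_n -> R) x :
  qform (\sum_(k in P) c k *: Emat k) x = \sum_(k in P) c k * x k 0 ^+ 2.
Proof. by rewrite qform_sum; apply: eq_bigr => k _; rewrite qformZ qform_delta. Qed.

Lemma psd_qform_lb n (U : 'M[R]_n) (lam : R) (P : {set 'I_n}) :
  psd (U - lam *: \sum_(k in P) Emat k) ->
  forall y : 'cV[R]_n, lam * \sum_(k in P) y k 0 ^+ 2 <= qform U y.
Proof.
move=> [_ psdU] y; have := psdU y; rewrite -/(qform _ y) qformD -scaleNr qformZ.
rewrite (eq_bigr (fun k => 1 *: Emat k)) => [|k _]; last by rewrite scale1r.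
by rewrite qform_diag mulNr subr_ge0; under eq_bigr do rewrite mul1r.
Qed.

Lemma qform_shift n (U : 'M[R]_n) (x y : 'cV[R]_n) (t : R) : U^T = U ->
  qform U (x + t *: y) = qform U x + 2 * t * (y^T *m U *m x) 0 0 + t ^+ 2 * qform U y.
Proof.
move=> symU; have xUy : (x^T *m U *m y) 0 0 = (y^T *m U *m x) 0 0.
  by rewrite -[in LHS](trmxK (x^T *m U *m y)) [LHS]mxE !trmx_mul trmxK symU mulmxA.
rewrite /qform; have -> : (x + t *: y)^T = x^T + t *: y^T by rewrite linearD linearZ.
move: xUy; rewrite !mulmxDl !mulmxDr -!scalemxAl -!scalemxAr !mxE => ->; ring.
Qed.

(* Minimise the form along the line x + t e_i. *)
Lemma psd_qform0_ker n (U : 'M[R]_n) x : psd U -> qform U x = 0 -> U *m x = 0.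
Proof.
move=> [symU psdU] x0; apply/matrixP => i j; rewrite (ord1 j) [RHS]mxE.
pose y : 'cV[R]_n := delta_mx i 0.
have <- : (y^T *m U *m x) 0 0 = (U *m x) i 0.
  rewrite -mulmxA mxE (bigD1 i) //= big1 ?addr0 => [|k ki]; last by rewrite !mxE (negbTE ki) mul0r.
  by rewrite !mxE !eqxx mul1r.
set b := (y^T *m U *m x) 0 0; have c0 : 0 <= qform U y := psdU y.
pose t := - b / (qform U y + 1).
have bt : b = - t * (qform U y + 1) by rewrite /t mulNr divfK ?opprK // gt_eqF //; lra.
have := psdU (x + t *: y); rewrite -/(qform _ _) qform_shift // x0 -/b add0r => h.
have : t = 0 by rewrite bt in h; nra.
by rewrite bt => ->; rewrite oppr0 mul0r.
Qed.

Lemma qform_cvg0 n (S : 'M[R]_n) (y : nat -> 'cV[R]_n) :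
  (forall k, y m k 0 @[m --> \oo] --> 0) -> qform S (y m) @[m --> \oo] --> 0.
Proof.
move=> y0; have -> : 0 = \sum_i \sum_j (0 : R) * S i j * 0.
  by rewrite big1 // => i _; rewrite big1 // => j _; rewrite !mul0r.
under eq_fun do rewrite qformE.
apply: cvg_big => [|i _]; first exact: add_continuous.
apply: cvg_big => [|j _]; first exact: add_continuous.
by apply: cvgM; first apply: cvgM; [exact: y0 | exact: cvg_cst | exact: y0].
Qed.

Lemma mulmx_cvg0 p q r (M : nat -> 'M[R]_(p, q)) (B : 'M[R]_(q, r)) :
  (forall i j, M m i j @[m --> \oo] --> 0) ->
  forall i j, (M m *m B) i j @[m --> \oo] --> 0.
Proof.
move=> M0 i j; have -> : 0 = \sum_k (0 : R) * B k j by rewrite big1 // => k _; rewrite mul0r.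
under eq_fun do rewrite mxE; apply: cvg_big => [|k _]; first exact: add_continuous.
by apply: cvgM; [exact: M0 | exact: cvg_cst].
Qed.

End QuadraticForms.

(* Controllability of the pair (A, U^(1/2)): no nonzero x is orthogonal to
   all the columns of the A^k U^(1/2). *)
Definition controllable (R : realType) n (A U : 'M[R]_n) :=
  forall x : 'cV[R]_n, x != 0 -> exists k, 0 < qform U ((A ^+ k)^T *m x).

Lemma controllableZ (R : realType) n (A U : 'M[R]_n) c :
  0 < c -> controllable A U -> controllable A (c *: U).
Proof.
by move=> c0 ctrl x /ctrl[k Uk]; exists k; rewrite qformZ mulr_gt0.
Qed.

Lemma psdZ (R : realType) n (U : 'M[R]_n) c : 0 <= c -> psd U -> psd (c *: U).
Proof.
move=> c0 [symU psdU]; split; first by rewrite linearZ /= symU.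
by move=> x; rewrite -/(qform _ x) qformZ mulr_ge0 // psdU.
Qed.

Section DiscreteLyapunov.
Variables (R : realType) (n : nat) (A S U : 'M[R]_n).
Hypothesis lyapS : A *m S *m A^T - S + U = 0.

Lemma lyap_unfold m :
  S = \sum_(k < m) A ^+ k *m U *m (A ^+ k)^T + A ^+ m *m S *m (A ^+ m)^T.
Proof.
have S_step : S = A *m S *m A^T + U by apply/eqP; rewrite eq_sym -subr_eq0 -lyapS addrAC.
elim: m => [|m IH]; first by rewrite big_ord0 add0r expr0 mul1mx trmx1 mulmx1.
rewrite big_ord_recr /= -addrA {1}IH; congr (_ + _).
rewrite {1}S_step mulmxDr mulmxDl addrC; congr (_ + _).
by rewrite exprSr -!mulmxE trmx_mul !mulmxA.
Qed.

Hypotheses (A_cvg0 : forall i j, (A ^+ m) i j @[m --> \oo] --> 0) (psdU : psd U).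

Lemma lyap_qform_ge k x : qform U ((A ^+ k)^T *m x) <= qform S x.
Proof.
pose u m := \sum_(j < m) qform U ((A ^+ j)^T *m x).
have uE m : u m = qform S x - qform S ((A ^+ m)^T *m x).
  rewrite [in qform S x](lyap_unfold m) qformD qform_sum qform_conj addrK.
  by under eq_bigr do rewrite qform_conj.
have u_cvg : u m @[m --> \oo] --> qform S x.
  under eq_fun do rewrite uE; rewrite -[X in nbhs X]subr0; apply: cvgB; first exact: cvg_cst.
  apply: qform_cvg0 => i; apply: mulmx_cvg0 => {}i j.
  by under eq_fun do rewrite mxE; exact: A_cvg0.
rewrite -(cvg_lim _ u_cvg) //; apply: limr_ge; first by apply/cvg_ex; exists (qform S x).
near=> m; have km : (k < m)%N by near: m; exact: nbhs_infty_gt.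
rewrite /u (bigD1 (Ordinal km)) //= lerDl.
by apply: sumr_ge0 => j _; case: psdU => _; apply.
Unshelve. all: by end_near.
Qed.

Lemma lyap_posdef : controllable A U -> forall x, x != 0 -> 0 < qform S x.
Proof. by move=> ctrl x /ctrl[k Uk]; exact: lt_le_trans Uk (lyap_qform_ge k x). Qed.

End DiscreteLyapunov.

Section ControllabilityCriteria.
Variables (R : realType) (n : nat).
Implicit Types (A U H : 'M[R]_n) (x y : 'cV[R]_n).

Lemma cV_neq0 x : x != 0 -> exists k, x k 0 != 0.
Proof.
move=> x0; apply/not_existsP => xk0; move/eqP: x0; apply; apply/matrixP => i j.
by rewrite (ord1 j) mxE; apply/eqP/negPn/negP/xk0.
Qed.

Lemma krylov_ubasis_mul N A k x (j : 'I_N) :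
  (krylov N A (ubasis k) *m x) j 0 = ((A ^+ j)^T *m x) k 0.
Proof.
rewrite !mxE; apply: eq_bigr => l _; rewrite !mxE (bigD1 k) //= big1 ?addr0 => [|i ik].
  by rewrite /ubasis mxE !eqxx mulr1.
by rewrite /ubasis mxE (negbTE ik) mulr0.
Qed.

Lemma krylov_full_rank_nz N A k x : \rank (krylov N A (ubasis k)) = n -> x != 0 ->
  exists j : 'I_N, ((A ^+ j)^T *m x) k 0 != 0.
Proof.
move=> rkK x0; apply/not_existsP => Kx0; move/eqP: x0; apply.
have /row_fullP[B BK] : row_full (krylov N A (ubasis k)) by rewrite /row_full rkK.
rewrite -[x]mul1mx -BK -mulmxA.
suff -> : krylov N A (ubasis k) *m x = 0 by rewrite mulmx0.
apply/matrixP => j l; rewrite (ord1 l) krylov_ubasis_mul [RHS]mxE.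
by apply/eqP/negPn/negP/Kx0.
Qed.

Lemma controllable_of_rank A U : psd U -> \rank U = n -> controllable A U.
Proof.
move=> psdU rkU x x0; exists 0%N; rewrite expr0 trmx1 mul1mx lt_def.
have -> : 0 <= qform U x by case: psdU => _; apply.
rewrite andbT; apply: contra x0 => /eqP /(psd_qform0_ker psdU) Ux0.
have uU : U \in unitmx by rewrite -row_free_unit /row_free rkU.
by rewrite -[x]mul1mx -(mulVmx uU) -mulmxA Ux0 mulmx0.
Qed.

Lemma controllable_of_coords_lb A U lam (P : {set 'I_n}) :
  0 < lam -> #|P| = n -> (forall y, lam * \sum_(k in P) y k 0 ^+ 2 <= qform U y) ->
  controllable A U.
Proof.
move=> lam0 Pn Ulb x /cV_neq0[i xi]; exists 0%N; rewrite expr0 trmx1 mul1mx.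
apply: lt_le_trans (Ulb x); rewrite pmulr_rgt0 //.
have Pi : i \in P.
  by rewrite (eqP (_ : P == [set: 'I_n]%SET)) ?inE // eqEcard finset.subsetT cardsT card_ord Pn /=.
rewrite (bigD1 i) //= ltr_pwDl ?exprn_even_gt0 //.
by apply: sumr_ge0 => k _; exact: sqr_ge0.
Qed.

Lemma controllable_of_krylov A U lam k :
  0 < lam -> (forall y, lam * y k 0 ^+ 2 <= qform U y) ->
  krylov_dim_eq A (ubasis k) n -> controllable A U.
Proof.
move=> lam0 Ulb [[N rkK] _] x x0; have [j xj] := krylov_full_rank_nz rkK x0.
by exists j; apply: lt_le_trans (Ulb _); rewrite mulr_gt0 // exprn_even_gt0.
Qed.

Lemma controllable_orthogonal_conj A U H : H *m H^T = 1%:M ->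
  controllable (H *m A *m invmx H) (H *m U *m H^T) -> controllable A U.
Proof.
move=> HHt ctrl x x0.
have HtH : H^T *m H = 1%:M := mulmx1C HHt.
have invH : invmx H = H^T.
  by rewrite -[invmx H]mulmx1 -HHt mulmxA mulVmx ?mul1mx // (mulmx1_unit HHt).1.
have powE j : (H *m A *m invmx H) ^+ j = H *m A ^+ j *m H^T.
  elim: j => [|j IH]; first by rewrite !expr0 mulmx1 HHt.
  by rewrite !exprSr IH invH -!mulmxE !mulmxA -[_ *m H^T *m H]mulmxA HtH mulmx1.
have Hx0 : H *m x != 0.
  by apply: contra x0 => /eqP Hx; rewrite -[x]mul1mx -HtH -mulmxA Hx mulmx0.
have [j Uj] := ctrl _ Hx0; exists j; move: Uj.
by rewrite powE qform_conj !trmx_mul !trmxK !mulmxA HtH mul1mx -(mulmxA _ H^T) HtH mulmx1.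
Qed.

Lemma sum_coords_sqr_ge (P : {set 'I_n}) (c : 'I_n -> R) k y :
  k \in P -> (forall l, l \in P -> 0 <= c l) ->
  c k * y k 0 ^+ 2 <= \sum_(l in P) c l * y l 0 ^+ 2.
Proof.
move=> kP c0; rewrite (bigD1 k) //= lerDl.
by apply: sumr_ge0 => l /andP[lP _]; rewrite mulr_ge0 ?sqr_ge0 ?c0.
Qed.

Lemma controllable_of_cases A U H (Mu : {set 'I_n}) (lamp : 'I_n -> R)
    (lamT : R) (Mubar : {set 'I_n}) :
  psd U -> H *m H^T = 1%:M -> (forall k, k \in Mu -> 0 < lamp k) ->
  H *m U *m H^T = \sum_(k in Mu) lamp k *: Emat k ->
  0 < lamT -> psd (U - lamT *: \sum_(k in Mubar) Emat k) ->
  (   \rank U = n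
   \/ (exists k, k \in Mu /\ krylov_dim_eq (H *m A *m invmx H) (ubasis k) n)
   \/ #|Mubar| = n
   \/ (exists k, k \in Mubar /\ krylov_dim_eq A (ubasis k) n)) ->
  controllable A U.
Proof.
move=> psdU HHt lamp0 HUH lamT0 /psd_qform_lb Ulb.
case=> [rkU | [[k [kMu krylovk]] | [Mubar_n | [k [kMubar krylovk]]]]].
- exact: controllable_of_rank.
- apply: (controllable_orthogonal_conj HHt).
  apply: (controllable_of_krylov (lamp0 k kMu) _ krylovk) => y.
  rewrite HUH qform_diag; apply: sum_coords_sqr_ge => // l lMu.
  exact/ltW/lamp0.
- exact: controllable_of_coords_lb Mubar_n Ulb.
- apply: (controllable_of_krylov lamT0 _ krylovk) => y; apply: le_trans (Ulb y).
  rewrite mulr_sumr; apply: (sum_coords_sqr_ge (c := fun=> lamT)) => // l _.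
  exact: ltW.
Qed.

End ControllabilityCriteria.

Section EntrywiseContinuity.
Variable R : realType.
Implicit Types (s : R).

Lemma sum_continuous_at (I : Type) (r : seq I) (P : pred I) (F : I -> R -> R) s :
  (forall i, {for s, continuous (F i)}) ->
  {for s, continuous (fun t => \sum_(i <- r | P i) F i t)}.
Proof. by move=> Fc; apply: cvg_big => [|i _]; [exact: add_continuous | exact: Fc]. Qed.

Lemma prod_continuous_at (I : Type) (r : seq I) (P : pred I) (F : I -> R -> R) s :
  (forall i, {for s, continuous (F i)}) ->
  {for s, continuous (fun t => \prod_(i <- r | P i) F i t)}.
Proof. by move=> Fc; apply: cvg_big => [|i _]; [exact: mul_continuous | exact: Fc]. Qed.

Definition mx_continuous_at p q (M : R -> 'M[R]_(p, q)) s :=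
  forall i j, {for s, continuous (fun t => M t i j)}.

Lemma mx_continuous_at_cst p q (M : 'M[R]_(p, q)) s : mx_continuous_at (fun=> M) s.
Proof. by move=> i j; exact: cvg_cst. Qed.

Lemma mx_continuous_at_mul p q r (M : R -> 'M[R]_(p, q)) (N : R -> 'M[R]_(q, r)) s :
  mx_continuous_at M s -> mx_continuous_at N s -> mx_continuous_at (fun t => M t *m N t) s.
Proof.
move=> Mc Nc i j.
have -> : (fun t => (M t *m N t) i j) = fun t => \sum_k M t i k * N t k j.
  by apply/funext => t; rewrite mxE.
by apply: sum_continuous_at => k; exact: continuousM.
Qed.

Lemma mx_continuous_at_tr p q (M : R -> 'M[R]_(p, q)) s :
  mx_continuous_at M s -> mx_continuous_at (fun t => (M t)^T) s.
Proof.
move=> Mc i j; have -> : (fun t => (M t)^T i j) = fun t => M t j i.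
  by apply/funext => t; rewrite mxE.
exact: Mc.
Qed.

Lemma det_continuous_at n (M : R -> 'M[R]_n) s :
  mx_continuous_at M s -> {for s, continuous (fun t => \det (M t))}.
Proof.
move=> Mc; apply: sum_continuous_at => sg; apply: continuousM; first exact: cvg_cst.
by apply: prod_continuous_at => i; exact: Mc.
Qed.

Lemma adj_continuous_at n (M : R -> 'M[R]_n) s :
  mx_continuous_at M s -> mx_continuous_at (fun t => \adj (M t)) s.
Proof.
move=> Mc i j.
have -> : (fun t => \adj (M t) i j) =
    fun t => (-1) ^+ (j + i) * \det (row' j (col' i (M t))).
  by apply/funext => t; rewrite mxE.
apply: continuousM; first exact: cvg_cst.
apply: det_continuous_at => a b.
have -> : (fun t => row' j (col' i (M t)) a b) = fun t => M t (lift j a) (lift i b).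
  by apply/funext => t; rewrite !mxE.
exact: Mc.
Qed.

Lemma inv_continuous_at n (M : R -> 'M[R]_n) s :
  mx_continuous_at M s -> \det (M s) != 0 ->
  mx_continuous_at (fun t => (\det (M t))^-1 *: \adj (M t)) s.
Proof.
move=> Mc detM i j.
have -> : (fun t => ((\det (M t))^-1 *: \adj (M t)) i j) =
    fun t => (\det (M t))^-1 * \adj (M t) i j.
  by apply/funext => t; rewrite mxE.
apply: continuousM; last exact: adj_continuous_at.
exact: (continuousV (s := fun t => \det (M t)) detM (det_continuous_at Mc)).
Qed.

End EntrywiseContinuity.

Section FundamentalMatrix.
Variable R : realType.

Lemma qform_ge_entry_norm n (M : 'M[R]_n) (x : 'cV[R]_n) :
  - ((\sum_i \sum_j `|M i j|) * \sum_i x i 0 ^+ 2) <= qform M x.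
Proof.
set G := \sum_i x i 0 ^+ 2.
have xG i : x i 0 * x i 0 <= G.
  by rewrite -expr2 /G (bigD1 i) //= lerDl sumr_ge0 // => k _; exact: sqr_ge0.
rewrite qformE mulr_suml -sumrN; apply: ler_sum => i _.
rewrite mulr_suml -sumrN; apply: ler_sum => j _.
move: (xG i) (xG j) (sqr_ge0 (x i 0 + x j 0)) (sqr_ge0 (x i 0 - x j 0)).
move: (x i 0) (x j 0) (M i j) => a b d; rewrite !expr2 => aG bG abP abM.
by case: (lerP 0 d) => d0; [rewrite ger0_norm // | rewrite ltr0_norm //]; nra.
Qed.

Lemma gronwall_pos (g g' : R -> R) (K t1 : R) : 0 <= t1 ->
  (forall s : R, is_derive s (1 : R) g (g' s)) ->
  (forall s, 0 <= s <= t1 -> - (K * g s) <= g' s) -> 0 < g 0 -> 0 < g t1.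
Proof.
move=> t10 gd gK g0.
pose e s := expR (K * s).
have ed (s : R) : is_derive s (1 : R) e (K * e s).
  rewrite mulrC; apply: (is_derive1_comp (f := expR) (g := fun s => K * s)).
  by have := is_deriveZ K (is_derive_id s (1 : R)); rewrite [K%:A]mulr1.
pose h s := g s * e s.
have hd (s : R) : is_derive s (1 : R) h (g s * (K * e s) + e s * g' s).
  exact: is_deriveM (gd s) (ed s).
have h_mono : h 0 <= h t1.
  apply: (@ger0_derive1_ndecr _ h 0 t1) => //.
  - move=> s; rewrite in_itv /= => /andP[s0 s1].
    rewrite derive1E (derive_val (is_derive := hd s)).
    have := gK s; rewrite (ltW s0) (ltW s1) => /(_ isT) gKs.
    have -> : g s * (K * e s) + e s * g' s = e s * (g' s + K * g s) by ring.
    by apply: mulr_ge0; [exact: expR_ge0 | lra].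
  - by apply: derivable_within_continuous => s _; case: (hd s).
have : 0 < h 0 by rewrite /h /e mulr0 expR0 mulr1.
by move/lt_le_trans/(_ h_mono); rewrite /h pmulr_lgt0 // expR_gt0.
Qed.

Section Solutions.
Variables (n : nat) (D Phi : R -> 'M[R]_n).
Hypothesis PhiD : fundamental D Phi.

Lemma fundamental_mulmx_is_derive (w : 'cV[R]_n) (s : R) i :
  is_derive s (1 : R) (fun t => (Phi t *m w) i 0) ((D s *m (Phi s *m w)) i 0).
Proof.
have -> : (fun t => (Phi t *m w) i 0) = fun t => \sum_j w j 0 * Phi t i j.
  by apply/funext => t; rewrite mxE; apply: eq_bigr => j _; rewrite mulrC.
rewrite mulmxA mxE; under eq_bigr do rewrite mulrC.
have := is_derive_sum (fun j => is_deriveZ (w j 0) (proj2 PhiD s i j)).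
by rewrite fct_sumE.
Qed.

Lemma fundamental_sqr_norm_is_derive (w : 'cV[R]_n) (s : R) :
  is_derive s (1 : R) (fun t => \sum_i (Phi t *m w) i 0 ^+ 2)
    (2 * qform (D s) (Phi s *m w)).
Proof.
set x := Phi s *m w.
have -> : 2 * qform (D s) x = \sum_i (x i 0 * (D s *m x) i 0 + x i 0 * (D s *m x) i 0).
  rewrite /qform -mulmxA mxE mulr_sumr; apply: eq_bigr => i _; rewrite mxE; ring.
have := is_derive_sum (fun i => is_deriveM (fundamental_mulmx_is_derive w s i)
  (fundamental_mulmx_is_derive w s i)).
by rewrite fct_sumE.
Qed.

(* If Phi(t) w = 0, the solution x = Phi(.) w of x' = D x has |x|^2 with
   derivative >= -2K|x|^2 on [0, t], so by Gronwall it cannot vanish at t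
   without vanishing at 0. *)
Lemma fundamental_unitmx : (forall i j, continuous (fun t => D t i j)) ->
  forall t, 0 <= t -> Phi t \in unitmx.
Proof.
move=> Dc t t0; apply: contraT => nu; exfalso.
have /det0P[v v0 vPhi] : \det (Phi t)^T == 0.
  by rewrite det_tr; move: nu; rewrite unitmxE unitfE negbK.
set w := v^T; have w0 : w != 0 by rewrite trmx_eq0.
have Phiw : Phi t *m w = 0 by rewrite -[Phi t]trmxK -trmx_mul vPhi trmx0.
pose g s := \sum_i (Phi s *m w) i 0 ^+ 2.
pose K s := \sum_i \sum_j `|D s i j|.
have Kc : continuous K.
  move=> s; apply: sum_continuous_at => i; apply: sum_continuous_at => j.
  exact: continuous_comp (Dc i j s) (@norm_continuous _ R _).
have [c _ Kmax] := EVT_max t0 (continuous_subspaceT Kc).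
have g_pos : 0 < g t.
  apply: (gronwall_pos (K := 2 * K c) t0 (fundamental_sqr_norm_is_derive w)).
    move=> s /andP[s0 st]; have Ks : K s <= K c by apply: Kmax; rewrite in_itv /= s0.
    have g0 : 0 <= g s by apply: sumr_ge0 => i _; exact: sqr_ge0.
    have := qform_ge_entry_norm (D s) (Phi s *m w); rewrite -/(K s) -/(g s).
    have := ler_wpM2r g0 Ks; lra.
  have [k wk] := cV_neq0 w0; rewrite /g (proj1 PhiD) mul1mx (bigD1 k) //=.
  by rewrite ltr_pwDl ?exprn_even_gt0 // sumr_ge0 // => i _; exact: sqr_ge0.
by move: g_pos; rewrite /g Phiw big1 ?ltxx // => i _; rewrite mxE expr0n.
Qed.

End Solutions.

End FundamentalMatrix.

Section RintegralSum.
Context (d : measure_display) (T : measurableType d) (R : realType).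
Variables (mu : {measure set T -> \bar R}) (D : set T).
Hypothesis mD : measurable D.

Lemma Rintegral_sum (I : Type) (r : seq I) (F : I -> T -> R) :
  (forall i, mu.-integrable D (EFin \o F i)) ->
  \int[mu]_(x in D) (\sum_(i <- r) F i x) = \sum_(i <- r) \int[mu]_(x in D) F i x.
Proof.
move=> Fint; elim: r => [|i r IH].
  by under eq_Rintegral do rewrite big_nil; rewrite big_nil Rintegral_cst // mul0r.
under eq_Rintegral do rewrite big_cons.
rewrite big_cons RintegralD //; first by congr (_ + _); exact: IH.
apply: eq_integrable (integrable_sum mD r (P := xpredT) (fun i _ => Fint i)) => //.
by move=> x _; rewrite /= sumEFin.
Qed.

End RintegralSum.

Section CovarianceMatrix.
Variable R : realType.

Lemma continuous_at_itv_integrable (f : R -> R) (a b : R) :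
  (forall s, a <= s <= b -> {for s, continuous f}) ->
  lebesgue_measure.-integrable `[a, b] (EFin \o f).
Proof.
move=> fc; apply: continuous_compact_integrable; first exact: segment_compact.
by apply: continuous_in_subspaceT => s; rewrite inE /= in_itv /= => /fc.
Qed.

Variables (n N : nat) (D Phi : R -> 'M[R]_n) (Lam : R -> 'M[R]_(n, N)).
Hypotheses (PhiD : fundamental D Phi) (Dc : forall i j, continuous (fun t => D t i j))
  (Lc : forall i j, continuous (fun t => Lam t i j)).

Lemma Upsilon_psd t : 0 <= t -> psd (Upsilon Phi Lam t).
Proof.
move=> t0; have mI : measurable (`[0, t] : set R) by exact: measurable_itv.
pose G s := Phi t *m ((\det (Phi s))^-1 *: \adj (Phi s)) *m Lam s.
pose g i j s := (G s *m (G s)^T) i j.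
have Phic s : mx_continuous_at Phi s.
  move=> i j; apply: differentiable_continuous; apply/derivable1_diffP.
  by case: (proj2 PhiD s i j).
have gc i j s : 0 <= s <= t -> {for s, continuous (g i j)}.
  move=> /andP[s0 _]; have Gc : mx_continuous_at G s.
    apply: (mx_continuous_at_mul
      (M := fun r => Phi t *m ((\det (Phi r))^-1 *: \adj (Phi r)))).
      apply: (mx_continuous_at_mul (M := fun=> Phi t)); first exact: mx_continuous_at_cst.
      apply: inv_continuous_at (Phic s) _.
      by rewrite -unitfE -unitmxE (fundamental_unitmx PhiD Dc).
    by move=> k l; exact: Lc.
  exact: mx_continuous_at_mul Gc (mx_continuous_at_tr Gc) i j.
have UE i j : Upsilon Phi Lam t i j = \int[lebesgue_measure]_(s in `[0, t]) g i j s.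
  rewrite mxE; apply: eq_Rintegral => s; rewrite inE /= in_itv /= => /andP[s0 _].
  by rewrite /g /G /invmx (fundamental_unitmx PhiD Dc).
split.
  apply/matrixP => i j; rewrite mxE !UE; apply: eq_Rintegral => s _.
  have GGt_sym : (G s *m (G s)^T)^T = G s *m (G s)^T by rewrite trmx_mul trmxK.
  by rewrite /g -[in RHS]GGt_sym [RHS]mxE.
move=> x; rewrite -/(qform _ x) qformE.
pose h i j s := x i 0 * x j 0 * g i j s.
have hc i j s : 0 <= s <= t -> {for s, continuous (h i j)}.
  by move=> st; apply: continuousM; [exact: cvg_cst | exact: gc].
have -> : \sum_i \sum_j x i 0 * Upsilon Phi Lam t i j * x j 0 =
    \int[lebesgue_measure]_(s in `[0, t]) \sum_i \sum_j h i j s.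
  rewrite Rintegral_sum //; last first.
    move=> i; apply: continuous_at_itv_integrable => s st.
    by apply: sum_continuous_at => j; exact: hc.
  apply: eq_bigr => i _; rewrite Rintegral_sum //; last first.
    by move=> j; apply: continuous_at_itv_integrable => s st; exact: hc.
  apply: eq_bigr => j _; rewrite RintegralZl ?UE; first by ring.
  - exact: mI.
  - by apply: continuous_at_itv_integrable => s st; exact: gc.
apply: Rintegral_ge0 => s _; have := qform_gram_ge0 (G s) x; rewrite qformE.
by under eq_bigr do under eq_bigr do rewrite mulrAC.
Qed.

Lemma Sigma_d_posdef eps S0 t : 0 < eps -> 0 <= t ->
  S0^T = S0 -> (forall x, x != 0 -> 0 < qform S0 x) -> posdef (Sigma_d Phi Lam eps S0 t).
Proof.
move=> eps0 t0 symS0 S0pd; have [symU psdU] := Upsilon_psd t0; set U := Upsilon Phi Lam t.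
have uPhi : (Phi t)^T \in unitmx by rewrite unitmx_tr (fundamental_unitmx PhiD Dc).
split; first by rewrite /Sigma_d linearD linearZ /= symU !trmx_mul trmxK symS0 mulmxA.
move=> x x0; rewrite -/(qform _ x) qformD qform_conj qformZ.
have Phix0 : (Phi t)^T *m x != 0.
  by apply: contra x0 => /eqP Phix; rewrite -[x]mul1mx -(mulVmx uPhi) -mulmxA Phix mulmx0.
have : 0 <= eps * qform U x by apply: mulr_ge0; [exact: ltW | exact: psdU].
have := S0pd _ Phix0; lra.
Qed.

End CovarianceMatrix.

Theorem corollary4p1 (R : realType) (n N : nat) (theta eps : R)
  (Dst : R -> 'M[R]_n) (Lst : R -> 'M[R]_(n, N)) (Phi : R -> 'M[R]_n)
  (S0 : 'M[R]_n) (H : 'M[R]_n) (Mu : {set 'I_n}) (lamp : 'I_n -> R)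
  (lamT : R) (Mubar : {set 'I_n}) :
  0 < theta -> 0 < eps ->
  (forall i j, continuous (fun t : R => Dst t i j)) ->
  (forall i j, continuous (fun t : R => Lst t i j)) ->
  (forall t : R, Dst (t + theta) = Dst t) ->
  (forall t : R, Lst (t + theta) = Lst t) ->
  fundamental Dst Phi ->
  CMbar (Phi theta) ->
  S0^T = S0 ->
  Phi theta *m S0 *m (Phi theta)^T - S0 + eps *: Upsilon Phi Lst theta = 0 ->
  H *m H^T = 1%:M ->
  (forall k, k \in Mu -> 0 < lamp k) ->
  H *m Upsilon Phi Lst theta *m H^T = \sum_(k in Mu) lamp k *: Emat k ->
  0 < lamT ->
  psd (Upsilon Phi Lst theta - lamT *: \sum_(k in Mubar) Emat k) ->
  (   \rank (Upsilon Phi Lst theta) = n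
   \/ (exists k, k \in Mu /\
         krylov_dim_eq (H *m Phi theta *m invmx H) (ubasis k) n)
   \/ #|Mubar| = n
   \/ (exists k, k \in Mubar /\ krylov_dim_eq (Phi theta) (ubasis k) n)) ->
  forall t : R, 0 <= t -> posdef (Sigma_d Phi Lst eps S0 t).
Proof.
move=> theta0 eps0 Dc Lc _ _ PhiD CM symS0 lyap HHt lamp0 HUH lamT0 psdT cases t t0.
apply: (Sigma_d_posdef PhiD Dc Lc eps0 t0 symS0).
have psdU := Upsilon_psd PhiD Dc Lc (ltW theta0).
apply: (lyap_posdef lyap).
- by apply: mxpow_cvg0 => z /CM /andP[].
- exact: psdZ (ltW eps0) psdU.
- exact/controllableZ/(controllable_of_cases psdU HHt lamp0 HUH lamT0 psdT cases).
Qed.
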